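(* No nonzero $E$-linear code of length $2n$ is both left symplectic nice and right symplectic nice.
   Context: $E=\langle \kappa,\tau \mid 2\kappa=2\tau=0,\ \kappa^2=\kappa,\ \tau^2=\tau,\ \kappa\tau=\kappa,\ \tau\kappa=\tau\rangle$ is the non-unital ring $\{0,\kappa,\tau,\zeta\}$ ($|E|=4$), $\zeta=\kappa+\tau$, with $e\kappa=e\tau=e$, $e\zeta=0$ for all $e\in E$. An $E$-linear code of length $2n$ is a left $E$-submodule $C\subseteq E^{2n}$. Symplectic inner product: for $x=(u|v),y=(u'|v')\in E^{2n}$, $\langle x,y\rangle_s=\sum_i u_iv'_i+\sum_i v_iu'_i$. $C^{\perp_{S_L}}=\{z\in E^{2n}:\langle z,w\rangle_s=0\ \forall w\in C\}$, $C^{\perp_{S_R}}=\{z\in E^{2n}:\langle w,z\rangle_s=0\ \forall w\in C\}$. $C$ is left (resp. right) symplectic nice if $|C|\,|C^{\perp_{S_L}}|=|E|^{2n}$ (resp. $|C|\,|C^{\perp_{S_R}}|=|E|^{2n}$). *)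

From HB Require Import structures.
From mathcomp Require Import all_boot.
Set Implicit Arguments. Unset Strict Implicit. Unset Printing Implicit Defensive.

(* The non-unital ring E = {0, kappa, tau, zeta}, zeta = kappa + tau,
   with 2k = 2t = 0, k^2 = k, t^2 = t, k t = k, t k = t.
   Multiplication table: e * kappa = e * tau = e, e * zeta = 0, e * 0 = 0. *)
Inductive E := E0 | Ek | Et | Ez.

Definition E_to (x : E) : bool * bool :=
  match x with E0 => (false, false) | Ek => (true, false)
             | Et => (false, true) | Ez => (true, true) end.
Definition E_of (p : bool * bool) : E :=
  match p with (false, false) => E0 | (true, false) => Ek
             | (false, true) => Et | (true, true) => Ez end.
Lemma E_toK : cancel E_to E_of. Proof. by case. Qed.

HB.instance Definition _ := Countable.copy E (can_type E_toK).
HB.instance Definition _ := Finite.copy E (can_type E_toK).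

Definition eadd (x y : E) : E :=
  E_of ((E_to x).1 (+) (E_to y).1, (E_to x).2 (+) (E_to y).2).

Definition emul (x y : E) : E :=
  match y with Ek | Et => x | _ => E0 end.

Definition vec (n : nat) := ({ffun 'I_n -> E} * {ffun 'I_n -> E})%type.

Definition vzero n : vec n := ([ffun => E0], [ffun => E0]).
Definition vadd n (x y : vec n) : vec n :=
  ([ffun i => eadd (x.1 i) (y.1 i)], [ffun i => eadd (x.2 i) (y.2 i)]).
Definition vscale n (e : E) (x : vec n) : vec n :=
  ([ffun i => emul e (x.1 i)], [ffun i => emul e (x.2 i)]).

Definition is_code n (C : {set vec n}) : Prop :=
  [/\ vzero n \in C,
      (forall x y, x \in C -> y \in C -> vadd x y \in C) &
      (forall e x, x \in C -> vscale e x \in C)].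

Definition sympl n (x y : vec n) : E :=
  eadd (\big[eadd/E0]_(i < n) emul (x.1 i) (y.2 i))
       (\big[eadd/E0]_(i < n) emul (x.2 i) (y.1 i)).

Definition sym_left_dual n (C : {set vec n}) : {set vec n} :=
  [set z | [forall w in C, sympl z w == E0]].
Definition sym_right_dual n (C : {set vec n}) : {set vec n} :=
  [set z | [forall w in C, sympl w z == E0]].

Definition left_sym_nice n (C : {set vec n}) : Prop :=
  #|C| * #|sym_left_dual C| = #|{: E}| ^ (2 * n).
Definition right_sym_nice n (C : {set vec n}) : Prop :=
  #|C| * #|sym_right_dual C| = #|{: E}| ^ (2 * n).

(* Let K be the vectors with entries in {0, kappa}: a copy of F_2^(2n) on
   which the symplectic form is an F_2-symplectic form, and every vector is
   uniquely a + tau b with a, b in K.  For a code C put D = kappa C and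
   M = K :&: C^(perp_L).  Counting with a basis gives |K| <= |D| |M|, while
   D + tau D lies in C and M + tau M in C^(perp_L); so left niceness forces
   C = D + tau D.  For such a C every z with kappa z in M is right orthogonal
   to C, so |C^(perp_R)| >= |M| |K|, and right niceness then forces |D| <= 1,
   that is C = 0. *)

From HB Require Import structures.
From Pilot Require Import Defs.
From mathcomp Require Import all_boot ssralg finalg.
Set Implicit Arguments. Unset Strict Implicit. Unset Printing Implicit Defensive.
Import GRing.Theory.
Local Open Scope ring_scope.

Section SubsetSums.
Variable V : finZmodType.
Hypothesis addvv : forall x : V, x + x = 0.

Definition subset_sums (gs : seq V) : {set V} :=
  foldr (fun g S => S :|: [set g + s | s in S]) [set 0] gs.

Lemma subset_sums_add gs x y :
  x \in subset_sums gs -> y \in subset_sums gs -> x + y \in subset_sums gs.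
Proof.
elim: gs x y => [|g gs IH] x y /=.
  by rewrite !inE => /eqP-> /eqP->; rewrite addr0.
rewrite !inE => /orP[hx | /imsetP[s hs ->]] /orP[hy | /imsetP[t ht ->]].
- by rewrite IH.
- by apply/orP; right; rewrite addrCA; apply: imset_f; apply: IH.
- by apply/orP; right; rewrite -addrA; apply: imset_f; apply: IH.
- by rewrite addrACA addvv add0r IH.
Qed.

Lemma subset_sums_sub (D : {set V}) gs :
  0 \in D -> (forall x y, x \in D -> y \in D -> x + y \in D) ->
  {subset gs <= D} -> subset_sums gs \subset D.
Proof.
move=> D0 Dadd; elim: gs => [|g gs IH] /= gsD; first by rewrite sub1set.
have gD : g \in D by apply: gsD; rewrite mem_head.
have sD : subset_sums gs \subset D.
  by apply: IH => x xgs; apply: gsD; rewrite inE xgs orbT.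
rewrite subUset sD; apply/subsetP=> _ /imsetP[s hs ->].
by apply: Dadd gD (subsetP sD s hs).
Qed.

Variables (beta : V -> V -> bool) (K : {set V}).
Hypothesis betaDl : forall x y z, beta (x + y) z = beta x z (+) beta y z.
Hypothesis betaDr : forall x y z, beta x (y + z) = beta x y (+) beta x z.
Hypothesis K_add : forall x y, x \in K -> y \in K -> x + y \in K.

Definition annihilator (gs : seq V) : {set V} :=
  [set a in K | all (fun g => ~~ beta a g) gs].

Lemma annihilator_subset_sums gs a s :
  a \in annihilator gs -> s \in subset_sums gs -> ~~ beta a s.
Proof.
rewrite inE => /andP[_]; elim: gs s => [|g gs IH] s /=.
  by rewrite inE => _ /eqP->; have := betaDr a 0 0; rewrite addr0 addbb => ->.
case/andP=> ag /IH{}IH; rewrite inE => /orP[/IH // | /imsetP[t /IH at_ ->]].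
by rewrite betaDr (negbTE ag) (negbTE at_).
Qed.

Lemma annihilator_cons gs g :
  annihilator (g :: gs) = annihilator gs :&: [set a | ~~ beta a g].
Proof. by apply/setP=> a; rewrite !inE /= andbA andbAC. Qed.

Lemma card_annihilator_cons gs g :
  (#|annihilator gs| <= 2 * #|annihilator (g :: gs)|)%N.
Proof.
rewrite -(cardsID [set a | ~~ beta a g] (annihilator gs)) -annihilator_cons.
rewrite mul2n -addnn leq_add2l.
have [-> | [a1 a1A]] := set_0Vmem (annihilator gs :\: [set a | ~~ beta a g]).
  by rewrite cards0.
rewrite -(card_imset _ (addIr a1)); apply: subset_leq_card.
apply/subsetP=> _ /imsetP[a aA ->]; move: aA a1A; rewrite !inE /=.
case/andP=> /negPn ag /andP[aK aall] /andP[/negPn a1g /andP[a1K a1all]].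
rewrite K_add //= betaDl ag a1g /=; apply/allP=> h hgs.
by rewrite betaDl (negbTE (allP aall h hgs)) (negbTE (allP a1all h hgs)).
Qed.

(* A new generator either already lies in the span, leaving the annihilator
   unchanged, or doubles the span while at most halving the annihilator. *)
Lemma card_subset_sums_annihilator gs :
  (#|K| <= #|subset_sums gs| * #|annihilator gs|)%N.
Proof.
elim: gs => [|g gs IH].
  rewrite /= cards1 mul1n subset_leq_card //.
  by apply/subsetP=> a aK; rewrite inE aK.
have [gS | gNS] := boolP (g \in subset_sums gs).
  have -> : annihilator (g :: gs) = annihilator gs.
    rewrite annihilator_cons; apply/setIidPl/subsetP=> a aA.
    by rewrite inE (annihilator_subset_sums aA gS).
  apply: (leq_trans IH); rewrite leq_mul2r subset_leq_card ?orbT //=.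
  exact: subsetUl.
have card_cons : #|subset_sums (g :: gs)| = (2 * #|subset_sums gs|)%N.
  rewrite /= cardsU card_imset; last exact: addrI.
  suff -> : subset_sums gs :&: [set g + s | s in subset_sums gs] = set0.
    by rewrite cards0 subn0 addnn -mul2n.
  apply/setP=> x; rewrite !inE; apply/negP=> /andP[xS /imsetP[s sS xE]].
  have gE : g = x + s by rewrite xE -addrA addvv addr0.
  by move: gNS; rewrite gE subset_sums_add.
apply: (leq_trans IH); rewrite card_cons -mulnA (mulnCA 2) leq_mul2l.
by rewrite card_annihilator_cons orbT.
Qed.
End SubsetSums.

Lemma eaddA : associative eadd. Proof. by do 3 case. Qed.
Lemma eaddC : commutative eadd. Proof. by do 2 case. Qed.
Lemma eadd0 : left_id E0 eadd. Proof. by case. Qed.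
Lemma eaddvv x : eadd x x = E0. Proof. by case: x. Qed.
(* The induced zmodType on [vec n] makes [vadd] and [vzero] of Defs
   convertible to [+] and [0], which the hypotheses of [is_code] rely on. *)
HB.instance Definition _ :=
  GRing.isZmodule.Build E eaddA eaddC eadd0 (opp := id) eaddvv.

Lemma vecP n (x y : vec n) :
  (forall i, x.1 i = y.1 i) -> (forall i, x.2 i = y.2 i) -> x = y.
Proof. by case: x y => [x1 x2] [y1 y2] /= h1 h2; congr pair; apply/ffunP. Qed.

Lemma vaddvv n (x : vec n) : x + x = 0.
Proof. by apply: vecP => i /=; rewrite !ffunE; apply: eaddvv. Qed.

Lemma card_vec n : #|{: vec n}| = (#|{: E}| ^ (2 * n))%N.
Proof. by rewrite card_prod !card_ffun card_ord -expnD addnn mul2n. Qed.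

Definition right_unit (e : E) := (e == Ek) || (e == Et).

Lemma right_unitD x y : right_unit (x + y) = right_unit x (+) right_unit y.
Proof. by case: x; case: y. Qed.

Lemma emulDl x y z : emul (x + y) z = emul x z + emul y z.
Proof. by case: z. Qed.
Lemma emulDr x y z : emul x (y + z) = emul x y + emul x z.
Proof. by case: x; case: y; case: z. Qed.
Lemma emulA x y z : emul x (emul y z) = emul (emul x y) z.
Proof. by case: x; case: y; case: z. Qed.
Lemma emulr0 x : emul x 0 = 0.
Proof. by []. Qed.
Lemma emul_right_unit e x y : right_unit e -> emul x (emul e y) = emul x y.
Proof. by case: e => //; case: y. Qed.

Lemma vscaleDr n e (x y : vec n) : vscale e (x + y) = vscale e x + vscale e y.
Proof. by apply: vecP => i /=; rewrite !ffunE emulDr. Qed.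
Lemma vscaleA n e e' (x : vec n) : vscale e (vscale e' x) = vscale (emul e e') x.
Proof. by apply: vecP => i /=; rewrite !ffunE emulA. Qed.
Lemma vscaler0 n e : vscale e (0 : vec n) = 0.
Proof. by apply: vecP => i /=; rewrite !ffunE. Qed.

Lemma symplE n (x y : vec n) :
  sympl x y = \sum_i emul (x.1 i) (y.2 i) + \sum_i emul (x.2 i) (y.1 i).
Proof. by []. Qed.

Lemma sympl_addl n (x y z : vec n) : sympl (x + y) z = sympl x z + sympl y z.
Proof.
rewrite !symplE; under eq_bigr do rewrite ffunE emulDl.
under [X in _ + X]eq_bigr do rewrite ffunE emulDl.
by rewrite !big_split /= addrACA.
Qed.

Lemma sympl_addr n (x y z : vec n) : sympl x (y + z) = sympl x y + sympl x z.
Proof.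
rewrite !symplE; under eq_bigr do rewrite ffunE emulDr.
under [X in _ + X]eq_bigr do rewrite ffunE emulDr.
by rewrite !big_split /= addrACA.
Qed.

Lemma emul_sumr e I (r : seq I) (P : pred I) (F : I -> E) :
  emul e (\sum_(i <- r | P i) F i) = \sum_(i <- r | P i) emul e (F i).
Proof. exact: (big_morph _ (emulDr e) (emulr0 e)). Qed.

Lemma sympl_scalel n e (x y : vec n) : sympl (vscale e x) y = emul e (sympl x y).
Proof.
rewrite !symplE emulDr !emul_sumr.
by congr (_ + _); apply: eq_bigr => i _; rewrite ffunE emulA.
Qed.

Lemma sympl_scaler n e (x y : vec n) :
  right_unit e -> sympl x (vscale e y) = sympl x y.
Proof.
move=> e_ru; rewrite !symplE.
by congr (_ + _); apply: eq_bigr => i _; rewrite ffunE emul_right_unit.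
Qed.

(* The fixed points of [vscale Ek] are the vectors with entries in {0, kappa}. *)
Definition kvecs n : {set vec n} := [set a | vscale Ek a == a].

Lemma kvecsP n (a : vec n) : reflect (vscale Ek a = a) (a \in kvecs n).
Proof. by rewrite inE; apply: eqP. Qed.

Lemma kvecs_scale n (x : vec n) : vscale Ek x \in kvecs n.
Proof. by apply/kvecsP; rewrite vscaleA. Qed.

Lemma kvecs0 n : 0 \in kvecs n.
Proof. by apply/kvecsP; rewrite vscaler0. Qed.

Lemma kvecsD n (a b : vec n) :
  a \in kvecs n -> b \in kvecs n -> a + b \in kvecs n.
Proof. by move=> /kvecsP aK /kvecsP bK; apply/kvecsP; rewrite vscaleDr aK bK. Qed.

Lemma sympl_kvecsC n (a b : vec n) :
  a \in kvecs n -> b \in kvecs n -> sympl a b = sympl b a.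
Proof.
move=> /kvecsP <- /kvecsP <-; rewrite !symplE addrC.
by congr (_ + _); apply: eq_bigr => i _; rewrite !ffunE; case: (_ i); case: (_ i).
Qed.

Definition kappa_tau n (p : vec n * vec n) : vec n := p.1 + vscale Et p.2.

Definition kappa_coord (e : E) : E := if (E_to e).1 then Ek else E0.
Definition tau_coord (e : E) : E := if (E_to e).2 then Ek else E0.
Definition kappa_part n (x : vec n) : vec n :=
  ([ffun i => kappa_coord (x.1 i)], [ffun i => kappa_coord (x.2 i)]).
Definition tau_part n (x : vec n) : vec n :=
  ([ffun i => tau_coord (x.1 i)], [ffun i => tau_coord (x.2 i)]).

Lemma kappa_tau_parts n (x : vec n) : kappa_tau (kappa_part x, tau_part x) = x.
Proof. by apply: vecP => i /=; rewrite !ffunE; case: (_ i). Qed.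

Lemma kappa_part_kvecs n (x : vec n) : kappa_part x \in kvecs n.
Proof. by apply/kvecsP/vecP => i /=; rewrite !ffunE; case: (_ i). Qed.

Lemma tau_part_kvecs n (x : vec n) : tau_part x \in kvecs n.
Proof. by apply/kvecsP/vecP => i /=; rewrite !ffunE; case: (_ i). Qed.

Lemma kappa_tauK n : {in setX (kvecs n) (kvecs n),
  cancel (@kappa_tau n) (fun x => (kappa_part x, tau_part x))}.
Proof.
case=> a b /setXP[/kvecsP <- /kvecsP <-].
by congr pair; apply: vecP => i /=; rewrite !ffunE; case: (_ i); case: (_ i).
Qed.

Lemma kappa_tau_inj n : {in setX (kvecs n) (kvecs n) &, injective (@kappa_tau n)}.
Proof. exact: can_in_inj (@kappa_tauK n). Qed.

Lemma card_kappa_tau n (A B : {set vec n}) :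
  A \subset kvecs n -> B \subset kvecs n ->
  #|[set kappa_tau p | p in setX A B]| = (#|A| * #|B|)%N.
Proof.
move=> AK BK; rewrite card_in_imset ?cardsX //.
by apply: sub_in2 (@kappa_tau_inj n); apply/subsetP; apply: setXS.
Qed.

Lemma card_vec_kvecs n : #|{: vec n}| = (#|kvecs n| * #|kvecs n|)%N.
Proof.
rewrite -card_kappa_tau //; apply: eq_card => x.
by rewrite inE -[x]kappa_tau_parts imset_f // inE kappa_part_kvecs tau_part_kvecs.
Qed.

Lemma sympl_kvecs_eq0 n (a g : vec n) :
  a \in kvecs n -> (sympl a g == 0) = ~~ right_unit (sympl a g).
Proof. by move=> /kvecsP <-; rewrite sympl_scalel; case: (sympl a g). Qed.

Lemma card_kappa_preimage n (A : {set vec n}) : A \subset kvecs n ->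
  (#|A| * #|kvecs n| <= #|[set z | vscale Ek z \in A]|)%N.
Proof.
move=> AK; pose f (p : vec n * vec n) := kappa_tau (p.1 + p.2, p.2).
have f_inj : {in setX A (kvecs n) &, injective f}.
  move=> [a b] [a' b'] /setXP[/(subsetP AK) aK bK] /setXP[/(subsetP AK) a'K b'K].
  move=> fE; have pE : (a + b, b) = (a' + b', b').
    by apply: kappa_tau_inj; rewrite ?in_setX ?kvecsD.
  have bE : b = b' := congr1 snd pE.
  by move: (congr1 fst pE); rewrite /= bE => /addIr ->.
rewrite -cardsX -(card_in_imset f_inj); apply/subset_leq_card/subsetP.
move=> _ /imsetP[[a b] /setXP[/[dup] aA /(subsetP AK) aK /kvecsP bK] ->].
rewrite inE /f /kappa_tau /= vscaleDr vscaleA vscaleDr (kvecsP _ aK) bK.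
by rewrite -addrA vaddvv addr0.
Qed.

Definition kappa_image n (C : {set vec n}) : {set vec n} :=
  [set vscale Ek w | w in C].
Definition kappa_dual n (C : {set vec n}) : {set vec n} :=
  kvecs n :&: sym_left_dual C.

Lemma kappa_image_kvecs n (C : {set vec n}) : kappa_image C \subset kvecs n.
Proof. by apply/subsetP => _ /imsetP[w _ ->]; apply: kvecs_scale. Qed.

Lemma kappa_dual_kvecs n (C : {set vec n}) : kappa_dual C \subset kvecs n.
Proof. exact: subsetIl. Qed.

Lemma left_dual_sup n (C : {set vec n}) :
  [set kappa_tau p | p in setX (kappa_dual C) (kappa_dual C)]
    \subset sym_left_dual C.
Proof.
apply/subsetP => _ /imsetP[[a b] /setXP[/setIP[_ aD] /setIP[_ bD]] ->].
rewrite inE; apply/forallP => w; apply/implyP => wC.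
move: aD bD; rewrite !inE => /forallP/(_ w) aw /forallP/(_ w) bw.
by rewrite sympl_addl sympl_scalel (eqP (implyP aw wC)) (eqP (implyP bw wC)).
Qed.

Section LinearCode.

Variables (n : nat) (C : {set vec n}).
Hypothesis C_code : is_code C.

Lemma mem_kappa_image0 : 0 \in kappa_image C.
Proof. by case: C_code => C0 _ _; rewrite -(vscaler0 n Ek); apply: imset_f. Qed.

Lemma kappa_imageD x y :
  x \in kappa_image C -> y \in kappa_image C -> x + y \in kappa_image C.
Proof.
case: C_code => _ Cadd _ /imsetP[w wC ->] /imsetP[w' w'C ->].
by rewrite -vscaleDr; apply: imset_f; apply: Cadd.
Qed.

Lemma kappa_image_sub : kappa_image C \subset C.
Proof.
by case: C_code => _ _ Cscale; apply/subsetP => _ /imsetP[w wC ->]; apply: Cscale.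
Qed.

Lemma kappa_tau_image_sub :
  [set kappa_tau p | p in setX (kappa_image C) (kappa_image C)] \subset C.
Proof.
case: C_code => _ Cadd Cscale; apply/subsetP.
move=> _ /imsetP[[_ _] /setXP[/imsetP[w wC ->] /imsetP[w' w'C ->]] ->].
by apply: Cadd; [apply: Cscale | apply/Cscale/Cscale].
Qed.

Lemma card_kvecs_le : (#|kvecs n| <= #|kappa_image C| * #|kappa_dual C|)%N.
Proof.
(* A canonical finZmodType instance on [vec n] would shadow its finType
   instance from Defs, so the structure is packed only locally. *)
pose V : finZmodType :=
  HB.pack (vec n) (Finite.on (vec n)) (GRing.Zmodule.on (vec n)).
(* On [kvecs n] the form takes values in {0, kappa}, so [beta] loses nothing. *)
pose beta (a g : V) := right_unit (sympl a g).
have betaDl x y z : beta (x + y) z = beta x z (+) beta y z.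
  by rewrite /beta sympl_addl right_unitD.
have betaDr x y z : beta x (y + z) = beta x y (+) beta x z.
  by rewrite /beta sympl_addr right_unitD.
have := card_subset_sums_annihilator (V := V) (@vaddvv n) betaDl betaDr
  (@kvecsD n) (enum (kappa_image C)).
move/leq_trans; apply; apply: leq_mul; apply: subset_leq_card.
  apply: subset_sums_sub; [exact: mem_kappa_image0 | exact: kappa_imageD |
                           by move=> x; rewrite mem_enum].
apply/subsetP => a; rewrite inE => /andP[aK /allP a_orth].
rewrite in_setI aK inE; apply/forallP => w; apply/implyP => wC.
rewrite -(sympl_scaler a w (isT : right_unit Ek)) sympl_kvecs_eq0 //.
by apply: a_orth; rewrite mem_enum; apply: imset_f.
Qed.

Lemma card_kvecs_gt0 : (0 < #|kvecs n|)%N.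
Proof. by apply/card_gt0P; exists 0; apply: kvecs0. Qed.

Lemma left_nice_codeE : left_sym_nice C ->
  C = [set kappa_tau p | p in setX (kappa_image C) (kappa_image C)].
Proof.
rewrite /left_sym_nice -card_vec card_vec_kvecs => nice.
apply/esym/eqP; rewrite eqEcard kappa_tau_image_sub.
rewrite card_kappa_tau ?kappa_image_kvecs //=.
have dual_ge := subset_leq_card (left_dual_sup C).
rewrite card_kappa_tau ?kappa_dual_kvecs // in dual_ge.
have kvecs_le := card_kvecs_le.
have dual_gt0 : (0 < #|kappa_dual C|)%N.
  by move: (leq_trans card_kvecs_gt0 kvecs_le); rewrite muln_gt0 => /andP[].
rewrite -(@leq_pmul2r (#|kappa_dual C| * #|kappa_dual C|)) ?muln_gt0 ?dual_gt0 //.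
apply: leq_trans (leq_mul (leqnn _) dual_ge) _.
by rewrite nice mulnACA leq_mul.
Qed.

Lemma right_dual_sup :
  C = [set kappa_tau p | p in setX (kappa_image C) (kappa_image C)] ->
  [set z | vscale Ek z \in kappa_dual C] \subset sym_right_dual C.
Proof.
move=> CE; apply/subsetP => z; rewrite !inE => /andP[zK /forallP z_orth].
apply/forallP => w; apply/implyP; rewrite {1}CE.
case/imsetP => -[d d'] /setXP[dD d'D] ->.
have orth_d e : e \in kappa_image C -> sympl e z = 0.
  move=> eD; rewrite -(sympl_scaler e z (isT : right_unit Ek)).
  rewrite sympl_kvecsC ?kvecs_scale ?(subsetP (kappa_image_kvecs C)) //.
  by apply/eqP/(implyP (z_orth e)); apply: (subsetP kappa_image_sub).
by rewrite /kappa_tau /= sympl_addl sympl_scalel !orth_d.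
Qed.

Lemma right_nice_kappa_image :
  C = [set kappa_tau p | p in setX (kappa_image C) (kappa_image C)] ->
  right_sym_nice C -> (#|kappa_image C| <= 1)%N.
Proof.
move=> CE; rewrite /right_sym_nice -card_vec card_vec_kvecs => nice.
have dual_ge := leq_trans (card_kappa_preimage (kappa_dual_kvecs C))
                          (subset_leq_card (right_dual_sup CE)).
have C_card : #|C| = (#|kappa_image C| * #|kappa_image C|)%N.
  by rewrite {1}CE card_kappa_tau ?kappa_image_kvecs.
have kvecs_le := card_kvecs_le.
have pos : (0 < #|kappa_image C| * #|kappa_dual C| * #|kvecs n|)%N.
  by rewrite muln_gt0 card_kvecs_gt0 (leq_trans card_kvecs_gt0 kvecs_le).
rewrite -(leq_pmul2r pos) mul1n !mulnA -C_card -mulnA.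
apply: leq_trans (leq_mul (leqnn _) dual_ge) _.
by rewrite nice leq_mul2r kvecs_le orbT.
Qed.

End LinearCode.

Theorem mainTheorem12 (n : nat) (C : {set vec n}) :
  is_code C -> C != [set vzero n] ->
  ~ (left_sym_nice C /\ right_sym_nice C).
Proof.
move=> C_code C_nz [left_nice right_nice].
have CE := left_nice_codeE C_code left_nice.
have D0 : kappa_image C = [set 0 : vec n].
  apply/eqP; rewrite eq_sym eqEcard sub1set mem_kappa_image0 // cards1.
  exact: right_nice_kappa_image.
move/eqP: C_nz; apply; rewrite CE D0.
have -> : setX [set 0 : vec n] [set 0 : vec n] = [set (0, 0) : vec n * vec n].
  by apply/setP => -[a b]; rewrite !inE xpair_eqE.
by rewrite imset_set1 /kappa_tau /= vscaler0 addr0.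
Qed.
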